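(* Let $T$ be a real with $0<T\le1$. For every $\alpha\in\mathbb{R}$, $\alpha$ is an r.e. $T$-convergent real if and only if there exists a $T$-convergent, computable, increasing sequence of reals which converges to $\alpha$.
   Context: A sequence $\{a_n\}$ is increasing if $a_{n+1}>a_n$ for all $n$. An increasing sequence $\{a_n\}$ of reals is $T$-convergent if $\sum_{n=0}^\infty(a_{n+1}-a_n)^T<\infty$. A real is r.e. if it is the limit of a computable increasing sequence of rationals; an r.e. real $\alpha$ is $T$-convergent if there is a $T$-convergent computable increasing sequence of rationals converging to $\alpha$. A sequence $\{a_n\}$ of reals is computable if there is a total recursive $f:\mathbb{N}\times\mathbb{N}\to\mathbb{Q}$ with $|a_n-f(n,m)|<2^{-m}$ for all $n,m$. *)

From Stdlib Require Import Reals Arith.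
Open Scope R_scope.

(** * Total recursive functions (Kleene's total mu-recursive functions),
    presented as unary functions nat -> nat with Cantor pairing for
    multiple arguments. *)

Definition cpair (x y : nat) : nat := ((x + y) * (x + y + 1) / 2 + y)%nat.

Definition unpair (n : nat) : nat * nat :=
  let w := ((Nat.sqrt (8 * n + 1) - 1) / 2)%nat in
  let t := (w * (w + 1) / 2)%nat in
  ((w - (n - t))%nat, (n - t)%nat).

Definition ufst (n : nat) : nat := fst (unpair n).
Definition usnd (n : nat) : nat := snd (unpair n).

Inductive total_recursive : (nat -> nat) -> Prop :=
| tr_zero : total_recursive (fun _ => 0%nat)
| tr_succ : total_recursive S
| tr_id : total_recursive (fun n => n)
| tr_fst : total_recursive ufst
| tr_snd : total_recursive usnd
| tr_add : total_recursive (fun n => (ufst n + usnd n)%nat)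
| tr_mul : total_recursive (fun n => (ufst n * usnd n)%nat)
| tr_sub : total_recursive (fun n => (ufst n - usnd n)%nat)
| tr_div : total_recursive (fun n => (ufst n / usnd n)%nat)
| tr_leb : total_recursive (fun n => if Nat.leb (ufst n) (usnd n) then 1%nat else 0%nat)
| tr_pair : forall f g, total_recursive f -> total_recursive g ->
    total_recursive (fun n => cpair (f n) (g n))
| tr_comp : forall f g, total_recursive f -> total_recursive g ->
    total_recursive (fun n => f (g n))
| tr_primrec : forall f g h, total_recursive f -> total_recursive g ->
    (forall x, h (cpair x 0) = f x) ->
    (forall x k, h (cpair x (S k)) = g (cpair x (cpair k (h (cpair x k))))) ->
    (forall n, h n = h (cpair (ufst n) (usnd n))) ->
    total_recursive h
| tr_min : forall f h, total_recursive f ->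
    (forall x, f (cpair x (h x)) = 0%nat) ->
    (forall x y, (y < h x)%nat -> f (cpair x y) <> 0%nat) ->
    total_recursive h
| tr_ext : forall f g, total_recursive f -> (forall n, f n = g n) ->
    total_recursive g.

(** Rational number coded by three naturals: (a - b) / (c + 1). *)
Definition rat_code (a b c : nat) : R := (INR a - INR b) / INR (S c).

Definition computable_rat_seq (q : nat -> R) : Prop :=
  exists a b c : nat -> nat,
    total_recursive a /\ total_recursive b /\ total_recursive c /\
    forall n, q n = rat_code (a n) (b n) (c n).

Definition computable_rat_seq2 (f : nat -> nat -> R) : Prop :=
  exists a b c : nat -> nat,
    total_recursive a /\ total_recursive b /\ total_recursive c /\
    forall n m, f n m = rat_code (a (cpair n m)) (b (cpair n m)) (c (cpair n m)).

Definition computable_real_seq (a : nat -> R) : Prop :=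
  exists f : nat -> nat -> R, computable_rat_seq2 f /\
    forall n m, Rabs (a n - f n m) < / 2 ^ m.

Definition increasing_seq (a : nat -> R) : Prop := forall n, a n < a (S n).

Definition T_convergent (T : R) (a : nat -> R) : Prop :=
  increasing_seq a /\
  exists s : R,
    Un_cv (fun N => sum_f_R0 (fun n => Rpower (a (S n) - a n) T) N) s.

Definition re_real (alpha : R) : Prop :=
  exists q : nat -> R, computable_rat_seq q /\ increasing_seq q /\ Un_cv q alpha.

Definition re_T_convergent (T alpha : R) : Prop :=
  re_real alpha /\
  exists q : nat -> R, computable_rat_seq q /\ increasing_seq q /\
    T_convergent T q /\ Un_cv q alpha.

(** One direction is immediate: a computable sequence of rationals is a
    computable sequence of reals.  For the other, let [a] be such a sequence
    of reals with rational approximations [|a_n - f n m| < 2^-m].  The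
    rationals [p_k = f k k - 3 2^-k] are computable, tend to the same limit,
    and their increments satisfy
    [a_{k+1} - a_k < p_{k+1} - p_k < a_{k+1} - a_k + 3 2^-k];
    so [p] is increasing, and by subadditivity of [x |-> x^T] the sum of
    [(p_{k+1} - p_k)^T] is bounded by that for [a] plus a geometric series. *)
From Stdlib Require Import Reals Lra Lia Psatz Arith.
Open Scope R_scope.

(** Consecutive products [s * (s + 1)] are even; this makes the division by
    2 in [cpair] exact. *)
Lemma triangular_even (s : nat) : exists m, (s * (s + 1) = 2 * m)%nat.
Proof.
  induction s as [|s [m Hm]]; [now exists 0%nat|].
  exists (m + s + 1)%nat; nia.
Qed.

(** [unpair] inverts the Cantor pairing: with [s = x + y] and
    [cpair x y = s(s+1)/2 + y], the integer square root of [8 * cpair x y + 1]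
    is [2s+1] or [2s+2], which recovers [s] and hence [x] and [y]. *)
Lemma unpair_cpair (x y : nat) : unpair (cpair x y) = (x, y).
Proof.
  unfold unpair, cpair.
  destruct (triangular_even (x + y)) as [m Hm].
  assert (Hhalf : (2 * m / 2 = m)%nat)
    by (rewrite Nat.mul_comm, Nat.div_mul; lia).
  rewrite Hm, Hhalf.
  replace (8 * (m + y) + 1)%nat
    with ((2 * (x + y) + 1) * (2 * (x + y) + 1) + 8 * y)%nat by nia.
  assert (Hsum : ((Nat.sqrt ((2 * (x + y) + 1) * (2 * (x + y) + 1) + 8 * y) - 1)
                  / 2 = x + y)%nat).
  { set (s := (x + y)%nat).
    destruct (Nat.sqrt_spec' ((2 * s + 1) * (2 * s + 1) + 8 * y)) as [Hlo Hhi].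
    set (r := Nat.sqrt _) in Hlo, Hhi |- *.
    assert (Hr_lo : (2 * s + 1 <= r)%nat).
    { destruct (le_lt_dec (2 * s + 1) r) as [h|h]; auto.
      assert (S r * S r <= (2 * s + 1) * (2 * s + 1))%nat
        by (apply Nat.mul_le_mono; lia).
      lia. }
    assert (Hr_hi : (r <= 2 * s + 2)%nat).
    { destruct (le_lt_dec r (2 * s + 2)) as [h|h]; auto.
      assert ((2 * s + 3) * (2 * s + 3) <= r * r)%nat
        by (apply Nat.mul_le_mono; lia).
      unfold s in *; nia. }
    assert (r = 2 * s + 1 \/ r = 2 * s + 2)%nat as [-> | ->] by lia.
    - replace (2 * s + 1 - 1)%nat with (s * 2)%nat by lia.
      now rewrite Nat.div_mul.
    - replace (2 * s + 2 - 1)%nat with (1 + s * 2)%nat by lia.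
      rewrite Nat.div_add by lia; simpl; lia. }
  rewrite Hsum, Hm, Hhalf.
  f_equal; lia.
Qed.

Lemma ufst_cpair (x y : nat) : ufst (cpair x y) = x.
Proof. unfold ufst; now rewrite unpair_cpair. Qed.

Lemma usnd_cpair (x y : nat) : usnd (cpair x y) = y.
Proof. unfold usnd; now rewrite unpair_cpair. Qed.

Lemma tr_lift2 (op : nat -> nat -> nat) (f g : nat -> nat) :
  total_recursive (fun n => op (ufst n) (usnd n)) ->
  total_recursive f -> total_recursive g ->
  total_recursive (fun n => op (f n) (g n)).
Proof.
  intros Hop Hf Hg.
  apply (tr_ext (fun n => op (ufst (cpair (f n) (g n))) (usnd (cpair (f n) (g n))))).
  - apply (tr_comp (fun n => op (ufst n) (usnd n))); [exact Hop|].
    now apply tr_pair.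
  - intro n; now rewrite ufst_cpair, usnd_cpair.
Qed.

Lemma tr_add2 (f g : nat -> nat) : total_recursive f -> total_recursive g ->
  total_recursive (fun n => (f n + g n)%nat).
Proof. apply (tr_lift2 Nat.add), tr_add. Qed.

Lemma tr_mul2 (f g : nat -> nat) : total_recursive f -> total_recursive g ->
  total_recursive (fun n => (f n * g n)%nat).
Proof. apply (tr_lift2 Nat.mul), tr_mul. Qed.

Lemma tr_sub2 (f g : nat -> nat) : total_recursive f -> total_recursive g ->
  total_recursive (fun n => (f n - g n)%nat).
Proof. apply (tr_lift2 Nat.sub), tr_sub. Qed.

Lemma tr_const (k : nat) : total_recursive (fun _ => k).
Proof.
  induction k as [|k IH]; [exact tr_zero|].
  exact (tr_comp S (fun _ => k) tr_succ IH).
Qed.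

Lemma tr_pow (b : nat) : total_recursive (fun n => b ^ n)%nat.
Proof.
  assert (Hrec : total_recursive (fun n => b ^ usnd n)%nat).
  { apply (tr_primrec (fun _ => 1%nat) (fun n => usnd (usnd n) * b)%nat).
    - apply tr_const.
    - apply tr_mul2; [apply (tr_comp usnd usnd); constructor | apply tr_const].
    - intro x; now rewrite usnd_cpair.
    - intros x k; rewrite !usnd_cpair; simpl; lia.
    - intro n; now rewrite usnd_cpair. }
  apply (tr_ext (fun n => b ^ usnd (cpair n n))%nat).
  - apply (tr_comp (fun n => b ^ usnd n)%nat); [exact Hrec|].
    apply tr_pair; constructor.
  - intro n; now rewrite usnd_cpair.
Qed.

Lemma tr_diag (g : nat -> nat) :
  total_recursive g -> total_recursive (fun k => g (cpair k k)).
Proof.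
  intro Hg; apply (tr_comp g (fun k => cpair k k)); [exact Hg|].
  apply tr_pair; constructor.
Qed.

(** A computable sequence of rationals is a computable sequence of reals:
    it approximates itself exactly, at every precision. *)
Lemma computable_rat_seq_real (q : nat -> R) :
  computable_rat_seq q -> computable_real_seq q.
Proof.
  intros [a [b [c [Ha [Hb [Hc Hq]]]]]].
  exists (fun n _ => q n); split.
  - exists (fun n => a (ufst n)), (fun n => b (ufst n)), (fun n => c (ufst n)).
    repeat split; try (apply (tr_comp _ ufst); auto; constructor).
    intros n m; rewrite ufst_cpair; apply Hq.
  - intros n m; rewrite Rminus_diag, Rabs_R0.
    apply Rinv_0_lt_compat, pow_lt; lra.
Qed.

Lemma computable_rat_seq2_diag (f : nat -> nat -> R) :
  computable_rat_seq2 f -> computable_rat_seq (fun k => f k k).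
Proof.
  intros [a [b [c [Ha [Hb [Hc Hf]]]]]].
  exists (fun k => a (cpair k k)), (fun k => b (cpair k k)), (fun k => c (cpair k k)).
  repeat split; try now apply tr_diag.
  intro k; apply Hf.
Qed.

(** Subtracting the dyadic rational [c / 2^k] preserves computability:
    [(a - b)/(d + 1) - c/2^k = (2^k a - (2^k b + c (d + 1))) / ((d + 1) 2^k)]. *)
Lemma computable_rat_seq_sub_dyadic (q : nat -> R) (c : nat) :
  computable_rat_seq q -> computable_rat_seq (fun k => q k - INR c * (/ 2) ^ k).
Proof.
  intros [a [b [d [Ha [Hb [Hd Hq]]]]]].
  exists (fun k => 2 ^ k * a k)%nat, (fun k => 2 ^ k * b k + c * (d k + 1))%nat,
         (fun k => (d k + 1) * 2 ^ k - 1)%nat.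
  repeat split.
  - apply tr_mul2; [apply tr_pow | exact Ha].
  - apply tr_add2; [apply tr_mul2; [apply tr_pow | exact Hb]|].
    apply tr_mul2; [apply tr_const | apply tr_add2; [exact Hd | apply tr_const]].
  - apply tr_sub2; [|apply tr_const].
    apply tr_mul2; [apply tr_add2; [exact Hd | apply tr_const] | apply tr_pow].
  - intro k; rewrite Hq; unfold rat_code.
    assert (H2k : (2 ^ k <> 0)%nat) by (apply Nat.pow_nonzero; lia).
    replace (S ((d k + 1) * 2 ^ k - 1)) with ((d k + 1) * 2 ^ k)%nat by nia.
    rewrite pow_inv, !S_INR, !mult_INR, !plus_INR, !mult_INR, !plus_INR, pow_INR.
    replace (INR 2) with 2 by (simpl; lra); replace (INR 1) with 1 by (simpl; lra).
    assert (0 < 2 ^ k) by (apply pow_lt; lra).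
    assert (0 <= INR (d k)) by apply pos_INR.
    field; lra.
Qed.

Lemma Rpower_pos (x T : R) : 0 < Rpower x T.
Proof. apply exp_pos. Qed.

Lemma exp_le_mono (x y : R) : x <= y -> exp x <= exp y.
Proof. intros [H | ->]; [left; now apply exp_increasing | lra]. Qed.

(** For [0 < T <= 1], raising to the power [T] does not decrease numbers
    of [(0, 1]]: [u^T = exp (T ln u) >= exp (ln u)] since [ln u <= 0]. *)
Lemma Rpower_ge_self (u T : R) :
  0 < u -> u <= 1 -> 0 < T -> T <= 1 -> u <= Rpower u T.
Proof.
  intros Hu Hu1 HT HT1; unfold Rpower.
  assert (Hln : ln u <= 0).
  { destruct Hu1 as [Hlt | ->]; [|rewrite ln_1; lra].
    rewrite <- ln_1; left; now apply ln_increasing. }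
  rewrite <- (exp_ln u) at 1 by lra.
  apply exp_le_mono; nra.
Qed.

(** Subadditivity of [x |-> x^T] for [0 < T <= 1]: writing
    [x = u (x + y)], [y = v (x + y)] with [u + v = 1], we get
    [x^T + y^T = (u^T + v^T) (x + y)^T >= (u + v) (x + y)^T]. *)
Lemma Rpower_subadd (x y T : R) : 0 < x -> 0 < y -> 0 < T -> T <= 1 ->
  Rpower (x + y) T <= Rpower x T + Rpower y T.
Proof.
  intros Hx Hy HT HT1.
  set (u := x / (x + y)); set (v := y / (x + y)).
  assert (Hu : 0 < u <= 1).
  { unfold u; split; [apply Rdiv_lt_0_compat; lra|].
    apply Rmult_le_reg_r with (x + y); [lra|]; field_simplify; lra. }
  assert (Hv : 0 < v <= 1).
  { unfold v; split; [apply Rdiv_lt_0_compat; lra|].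
    apply Rmult_le_reg_r with (x + y); [lra|]; field_simplify; lra. }
  assert (Huv : u + v = 1) by (unfold u, v; field; lra).
  assert (Ex : Rpower x T = Rpower u T * Rpower (x + y) T).
  { rewrite Rpower_mult_distr by lra; f_equal; unfold u; field; lra. }
  assert (Ey : Rpower y T = Rpower v T * Rpower (x + y) T).
  { rewrite Rpower_mult_distr by lra; f_equal; unfold v; field; lra. }
  rewrite Ex, Ey.
  pose proof (Rpower_ge_self u T (proj1 Hu) (proj2 Hu) HT HT1).
  pose proof (Rpower_ge_self v T (proj1 Hv) (proj2 Hv) HT HT1).
  pose proof (Rpower_pos (x + y) T).
  nra.
Qed.

Lemma Rpower_geometric (c b T : R) (k : nat) : 0 < c -> 0 < b ->
  Rpower (c * b ^ k) T = Rpower c T * Rpower b T ^ k.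
Proof.
  intros Hc Hb.
  rewrite <- Rpower_mult_distr by (try apply pow_lt; lra); f_equal.
  rewrite <- (Rpower_pow k b), <- (Rpower_pow k (Rpower b T)) by
    (try apply Rpower_pos; lra).
  rewrite !Rpower_mult; f_equal; ring.
Qed.

Lemma Rpower_lt_1 (b T : R) : 0 < b < 1 -> 0 < T -> Rpower b T < 1.
Proof.
  intros Hb HT; unfold Rpower; rewrite <- exp_0; apply exp_increasing.
  assert (ln b < 0) by (rewrite <- ln_1; apply ln_increasing; lra).
  nra.
Qed.

Lemma partial_sum_le_limit (w : nat -> R) (s : R) :
  (forall n, 0 <= w n) -> Un_cv (fun N => sum_f_R0 w N) s ->
  forall N, sum_f_R0 w N <= s.
Proof.
  intros Hw Hs; apply growing_ineq; [|exact Hs].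
  intro n; simpl; pose proof (Hw (S n)); lra.
Qed.

Lemma partial_sums_cv_of_bounded (w : nat -> R) (M : R) :
  (forall n, 0 <= w n) -> (forall N, sum_f_R0 w N <= M) ->
  exists s, Un_cv (fun N => sum_f_R0 w N) s.
Proof.
  intros Hw HM.
  destruct (growing_cv (fun N => sum_f_R0 w N)) as [s Hs].
  - intro n; simpl; pose proof (Hw (S n)); lra.
  - exists M; intros x [N ->]; apply HM.
  - now exists s.
Qed.

Lemma geometric_sum_le (C r : R) (N : nat) : 0 <= C -> 0 < r < 1 ->
  sum_f_R0 (fun k => C * r ^ k) N <= C / (1 - r).
Proof.
  intros HC Hr.
  rewrite (sum_eq _ (fun k => r ^ k * C)) by (intros; ring).
  rewrite <- scal_sum, tech3 by lra.
  assert (Htail : 0 <= C * r ^ S N / (1 - r)).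
  { apply Rmult_le_pos; [apply Rmult_le_pos; [lra | apply pow_le; lra]|].
    left; apply Rinv_0_lt_compat; lra. }
  replace (C * ((1 - r ^ S N) / (1 - r)))
    with (C / (1 - r) - C * r ^ S N / (1 - r)) by (field; lra).
  lra.
Qed.

(** Stability of [T]-convergence: if the increments of an increasing
    sequence [p] are bounded by those of a [T]-convergent sequence [a] plus
    a geometric error [c b^k], then [p] is [T]-convergent too, because
    [(p_{k+1} - p_k)^T <= (a_{k+1} - a_k)^T + c^T (b^T)^k] by subadditivity
    and the right-hand side is summable. *)
Lemma T_convergent_perturb (T c b : R) (a p : nat -> R) :
  0 < T -> T <= 1 -> 0 < c -> 0 < b < 1 ->
  T_convergent T a -> increasing_seq p ->
  (forall k, p (S k) - p k <= a (S k) - a k + c * b ^ k) ->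
  T_convergent T p.
Proof.
  intros HT HT1 Hc Hb [Ha [s Hs]] Hp Hincr.
  split; [exact Hp|].
  set (r := Rpower b T).
  assert (Hr : 0 < r < 1) by (split; [apply Rpower_pos | now apply Rpower_lt_1]).
  assert (Hterm : forall k,
    Rpower (p (S k) - p k) T <= Rpower (a (S k) - a k) T + Rpower c T * r ^ k).
  { intro k.
    pose proof (Hp k); pose proof (Ha k).
    assert (0 < b ^ k) by (apply pow_lt; lra).
    apply Rle_trans with (Rpower (a (S k) - a k + c * b ^ k) T).
    { apply Rle_Rpower_l; [lra | split; [lra | apply Hincr]]. }
    unfold r; rewrite <- Rpower_geometric by lra.
    apply Rpower_subadd; nra. }
  assert (Hsa := partial_sum_le_limit _ s (fun n => ltac:(left; apply Rpower_pos)) Hs).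
  apply (partial_sums_cv_of_bounded _ (s + Rpower c T / (1 - r))).
  { intro n; left; apply Rpower_pos. }
  intro N.
  apply Rle_trans with (sum_f_R0 (fun k =>
    Rpower (a (S k) - a k) T + Rpower c T * r ^ k) N).
  { now apply sum_growing. }
  rewrite plus_sum.
  pose proof (Hsa N).
  pose proof (geometric_sum_le (Rpower c T) r N ltac:(left; apply Rpower_pos) Hr).
  lra.
Qed.

Lemma Un_cv_dyadic_close (a p : nat -> R) (c l : R) : 0 < c ->
  (forall k, Rabs (p k - a k) <= c * (/ 2) ^ k) -> Un_cv a l -> Un_cv p l.
Proof.
  intros Hc Hclose Ha eps Heps.
  destruct (Ha (eps / 2)) as [N1 HN1]; [lra|].
  destruct (pow_lt_1_zero (/ 2) ltac:(rewrite Rabs_pos_eq; lra) (eps / (2 * c)))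
    as [N2 HN2]; [apply Rdiv_lt_0_compat; lra|].
  exists (Nat.max N1 N2); intros n Hn; unfold R_dist in *.
  specialize (HN1 n ltac:(lia)); specialize (HN2 n ltac:(lia)).
  rewrite Rabs_pos_eq in HN2 by (apply pow_le; lra).
  assert (Hsmall : c * (/ 2) ^ n < eps / 2).
  { apply Rmult_lt_compat_l with (r := c) in HN2; [|lra].
    replace (c * (eps / (2 * c))) with (eps / 2) in HN2 by (field; lra); lra. }
  pose proof (Hclose n).
  replace (p n - l) with ((p n - a n) + (a n - l)) by ring.
  eapply Rle_lt_trans; [apply Rabs_triang|]; lra.
Qed.

Lemma dyadic_shift_increments (a g : nat -> R) :
  (forall k, Rabs (a k - g k) < (/ 2) ^ k) ->
  forall k, let p := fun k => g k - 3 * (/ 2) ^ k in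
    a (S k) - a k < p (S k) - p k < a (S k) - a k + 3 * (/ 2) ^ k.
Proof.
  intros Happrox k p; unfold p.
  destruct (Rabs_def2 _ _ (Happrox k)), (Rabs_def2 _ _ (Happrox (S k))).
  simpl pow in *.
  assert (0 < (/ 2) ^ k) by (apply pow_lt; lra).
  lra.
Qed.

Lemma re_T_convergent_of_computable_real_seq (T alpha : R) (a : nat -> R) :
  0 < T -> T <= 1 ->
  T_convergent T a -> computable_real_seq a -> Un_cv a alpha ->
  re_T_convergent T alpha.
Proof.
  intros HT HT1 HaT [f [Hf Happrox]] Ha.
  set (p := fun k => f k k - 3 * (/ 2) ^ k).
  assert (Hthree : INR 3 = 3) by (simpl; lra).
  assert (Hdiag : forall k, Rabs (a k - f k k) < (/ 2) ^ k)
    by (intro k; rewrite pow_inv; apply Happrox).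
  assert (Hincr := dyadic_shift_increments a (fun k => f k k) Hdiag).
  cbv zeta in Hincr.
  assert (Hp_comp : computable_rat_seq p).
  { pose proof (computable_rat_seq_sub_dyadic _ 3 (computable_rat_seq2_diag f Hf))
      as Hcomp.
    rewrite Hthree in Hcomp; exact Hcomp. }
  assert (Hp_inc : increasing_seq p).
  { intro k; pose proof (Hincr k); pose proof (proj1 HaT k); unfold p; lra. }
  assert (Hp_cv : Un_cv p alpha).
  { apply (Un_cv_dyadic_close a p 4); [lra| |exact Ha].
    intro k; unfold p.
    destruct (Rabs_def2 _ _ (Hdiag k)).
    assert (0 < (/ 2) ^ k) by (apply pow_lt; lra).
    apply Rabs_le; lra. }
  assert (Hp_T : T_convergent T p).
  { apply (T_convergent_perturb T 3 (/ 2) a p); try lra; auto.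
    intro k; pose proof (Hincr k); unfold p; lra. }
  split; [exists p; auto|].
  exists p; auto.
Qed.

Theorem mainTheorem2 (T : R) (hT0 : 0 < T) (hT1 : T <= 1) :
  forall alpha : R,
    re_T_convergent T alpha <->
    exists a : nat -> R,
      T_convergent T a /\ computable_real_seq a /\ increasing_seq a /\ Un_cv a alpha.
Proof.
  intro alpha; split.
  - intros [_ [q [Hq [Hinc [HqT Hcv]]]]].
    exists q; split; [exact HqT|].
    split; [now apply computable_rat_seq_real | now split].
  - intros [a [HaT [Hcomp [_ Hcv]]]].
    now apply (re_T_convergent_of_computable_real_seq T alpha a).
Qed.
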